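(* Let $N\in\mathbb{N}$, $a\in\{1,\dots,N\}$, and $\varepsilon,p,q,C\in\mathbb{R}$ with $\varepsilon>0$, $p>1$, $C>0$. Let $(M_k)_{k\ge0}$ be real numbers with $|M_k|<\dfrac{C\log^q(Nk+N+a)}{k^p+\varepsilon}$ for all $k\in\mathbb{N}_0$. Then $$\lim_{n\to\infty}\sum_{k=0}^n|M_k|\frac{N\left[\left(\frac{a}{N}\right)_{n+1}\right]^2}{(n-k)!\left(\frac{2a}{N}\right)_{n+k+1}}=\frac{N}{B\left(\frac{a}{N},\frac{a}{N}\right)}\sum_{k=0}^\infty|M_k|.$$
   Context: $(x)_m$ is the Pochhammer symbol and $B(x,y)=\Gamma(x)\Gamma(y)/\Gamma(x+y)$ is the Beta function. *)

From Stdlib Require Import Reals Factorial.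
From Coquelicot Require Import Coquelicot.
Open Scope R_scope.

Fixpoint poch (x : R) (m : nat) : R :=
  match m with
  | O => 1
  | S m' => poch x m' * (x + INR m')
  end.

Definition Gamma (x : R) : R :=
  RInt_gen (fun t => Rpower t (x - 1) * exp (- t))
           (at_right 0) (Rbar_locally p_infty).

Definition Beta (x y : R) : R := Gamma x * Gamma y / Gamma (x + y).

Definition natpow (k : nat) (p : R) : R :=
  match k with O => 0 | _ => Rpower (INR k) p end.

From Stdlib Require Import Reals Factorial Lra Lia.
From Coquelicot Require Import Coquelicot.
Open Scope R_scope.

(* Put x = a/N and z = 2x.  The k-th summand equals
     |M_k| * T(n) * r(n,k),   T(n) = N (x)_{n+1}^2 / (n! (2x)_{n+1}),
   where r(n,k) = n! (z)_{n+1} / ((n-k)! (z)_{n+k+1}) = prod_{j<k} (n-j)/(z+n+j+1).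
   The theorem then follows from three independent facts.
   1. Gauss's product formula n! n^y / (y)_{n+1} -> Gamma(y) for y > 0, with Gamma the
      improper Euler integral.  The Gauss quotient is the exact integral of
      t^{y-1} (1 - t/n)^n over (0, n] (repeated integration by parts); comparing it with
      t^{y-1} e^{-t} on a window [a, b] gives errors a^y/y + D/(1+b) + D/n, which shows that
      the quotients converge and that their limit is the Euler integral.  Hence
      T(n) -> N Gamma(2x)/Gamma(x)^2 = N / B(x,x).
   2. Tannery's theorem: r(n,k) lies in (0,1] and tends to 1 for fixed k, so for a
      summable nonnegative (m_k), sum_{k<=n} m_k r(n,k) -> sum_k m_k.
   3. The growth hypothesis gives |M_k| = O((k+1)^{-(p+1)/2}), and the p-series converges
      by a telescoping comparison; so (|M_k|) is summable. *)

Lemma Rpower_pos (x e : R) : 0 < Rpower x e.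
Proof. unfold Rpower; apply exp_pos. Qed.

Lemma is_derive_Rpower (e t : R) :
  0 < t -> is_derive (fun u => Rpower u e) t (e * Rpower t (e - 1)).
Proof. intros Ht; apply is_derive_Reals, derivable_pt_lim_power; exact Ht. Qed.

Lemma ex_derive_Rpower (e t : R) : 0 < t -> ex_derive (fun u => Rpower u e) t.
Proof. intros Ht; eexists; apply is_derive_Rpower; exact Ht. Qed.

Lemma Derive_Rpower (e t : R) :
  0 < t -> Derive (fun u => Rpower u e) t = e * Rpower t (e - 1).
Proof. intros Ht; apply is_derive_unique, is_derive_Rpower; exact Ht. Qed.

Lemma Rpower_one_base (e : R) : Rpower 1 e = 1.
Proof. unfold Rpower; rewrite ln_1, Rmult_0_r; apply exp_0. Qed.

Lemma Rpower_le_1 (t e : R) : 0 < t <= 1 -> 0 <= e -> Rpower t e <= 1.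
Proof.
  intros Ht He. rewrite <- (Rpower_one_base e). apply Rle_Rpower_l; lra.
Qed.

Lemma Rpower_plus_2 (t e : R) : 0 < t -> Rpower t (e + 2) = Rpower t e * t ^ 2.
Proof.
  intros Ht. rewrite Rpower_plus, <- (Rpower_pow 2 t Ht). reflexivity.
Qed.

Lemma small_Rpower (y eps : R) : 0 < y -> 0 < eps ->
  exists d, 0 < d <= 1 /\ forall t, 0 < t <= d -> Rpower t y < eps.
Proof.
  intros Hy He.
  set (d0 := Rpower (eps / 2) (/ y)).
  assert (Hd0 : 0 < d0) by apply Rpower_pos.
  exists (Rmin 1 d0). split; [split; [apply Rmin_glb_lt; lra | apply Rmin_l] |].
  intros t Ht.
  apply Rle_lt_trans with (Rpower d0 y).
  - apply Rle_Rpower_l; [lra |]. pose proof (Rmin_r 1 d0); lra.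
  - unfold d0. rewrite Rpower_mult, Rinv_l, Rpower_1; lra.
Qed.

Lemma pow_unit_interval (x : R) (n : nat) : 0 <= x <= 1 -> 0 <= x ^ n <= 1.
Proof.
  intros Hx. split; [apply pow_le; lra |]. rewrite <- (pow1 n). apply pow_incr; exact Hx.
Qed.

Lemma one_minus_ratio (t c : R) : 0 < c -> 0 <= t <= c -> 0 <= 1 - t / c <= 1.
Proof.
  intros Hc Ht. assert (t / c <= 1) by (apply Rle_div_l; lra).
  assert (0 <= t / c) by (apply Rdiv_le_0_compat; lra). lra.
Qed.

Lemma exp_pow_nat (x : R) (n : nat) : exp x ^ n = exp (INR n * x).
Proof.
  induction n as [| n IH]; [simpl; rewrite Rmult_0_l, exp_0; reflexivity |].
  rewrite S_INR; simpl pow; rewrite IH, <- exp_plus; f_equal; ring.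
Qed.

Lemma bernoulli_ineq (h : R) (n : nat) : -1 <= h -> 1 + INR n * h <= (1 + h) ^ n.
Proof.
  intros Hh. induction n as [| n IH]; [simpl; lra |].
  rewrite S_INR; simpl pow.
  assert (0 <= INR n * h * h) by (rewrite Rmult_assoc; apply Rmult_le_pos; [apply pos_INR | nra]).
  apply Rle_trans with ((1 + h) * (1 + INR n * h)); [nra |].
  apply Rmult_le_compat_l; lra.
Qed.

Lemma pow_le_exp (t : R) (m : nat) : 0 <= t -> (0 < m)%nat -> t ^ m <= INR m ^ m * exp t.
Proof.
  intros Ht Hm. assert (HmR : 0 < INR m) by (apply lt_0_INR; exact Hm).
  assert (Hq : 0 <= t / INR m) by (apply Rdiv_le_0_compat; lra).
  replace (t ^ m) with (INR m ^ m * (t / INR m) ^ m)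
    by (rewrite <- Rpow_mult_distr; f_equal; field; lra).
  apply Rmult_le_compat_l; [apply pow_le; lra |].
  replace (exp t) with (exp (t / INR m) ^ m) by (rewrite exp_pow_nat; f_equal; field; lra).
  apply pow_incr. split; [exact Hq |].
  apply Rle_trans with (1 + t / INR m); [lra | apply exp_ineq1_le].
Qed.

Lemma one_minus_pow_bounds (n : nat) (t : R) : (1 <= n)%nat -> 0 <= t <= INR n ->
  0 <= (1 - t / INR n) ^ n <= exp (- t).
Proof.
  intros Hn Ht. assert (Hc : 0 < INR n) by (apply lt_0_INR; lia).
  assert (Hq : t / INR n <= 1) by (apply Rle_div_l; lra).
  split; [apply pow_le; lra |].
  replace (exp (- t)) with (exp (- t / INR n) ^ n) by (rewrite exp_pow_nat; f_equal; field; lra).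
  apply pow_incr. split; [lra |].
  pose proof (exp_ineq1_le (- t / INR n)). unfold Rdiv in *; lra.
Qed.

(* The defect of the approximation: e^{-t} - (1 - t/n)^n <= t^2 e^{-t} / n.  Indeed
   (1 - t/n)^n (1 + t/n)^n = (1 - t^2/n^2)^n >= 1 - t^2/n by Bernoulli, and (1 + t/n)^n <= e^t. *)
Lemma exp_minus_one_minus_pow (n : nat) (t : R) : (1 <= n)%nat -> 0 <= t <= INR n ->
  exp (- t) - (1 - t / INR n) ^ n <= t ^ 2 * exp (- t) / INR n.
Proof.
  intros Hn Ht. assert (Hc : 0 < INR n) by (apply lt_0_INR; lia).
  assert (Hq : 0 <= t / INR n) by (apply Rdiv_le_0_compat; lra).
  assert (Hplus : (1 + t / INR n) ^ n <= exp t).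
  { replace (exp t) with (exp (t / INR n) ^ n) by (rewrite exp_pow_nat; f_equal; field; lra).
    apply pow_incr. split; [lra | apply exp_ineq1_le]. }
  assert (Hprod : 1 - t ^ 2 / INR n <= (1 - t / INR n) ^ n * (1 + t / INR n) ^ n).
  { rewrite <- Rpow_mult_distr.
    replace ((1 - t / INR n) * (1 + t / INR n)) with (1 + - (t ^ 2 / INR n ^ 2)) by (field; lra).
    replace (1 - t ^ 2 / INR n) with (1 + INR n * - (t ^ 2 / INR n ^ 2)) by (field; lra).
    apply bernoulli_ineq.
    assert (t ^ 2 / INR n ^ 2 <= 1) by (apply Rle_div_l; nra). lra. }
  pose proof (one_minus_pow_bounds n t Hn Ht) as [H0 Hle].
  assert (He : 0 < exp (- t)) by apply exp_pos.
  assert (Hee : exp (- t) * exp t = 1) by (rewrite <- exp_plus, Rplus_opp_l; apply exp_0).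
  assert (Hlow : exp (- t) * (1 - t ^ 2 / INR n) <= (1 - t / INR n) ^ n).
  { destruct (Rle_dec 0 (1 - t ^ 2 / INR n)); [| nra].
    apply Rle_trans with (exp (- t) * ((1 - t / INR n) ^ n * exp t)); [| nra].
    apply Rmult_le_compat_l; [lra |].
    apply Rle_trans with ((1 - t / INR n) ^ n * (1 + t / INR n) ^ n); [lra |].
    apply Rmult_le_compat_l; lra. }
  unfold Rdiv in *. nra.
Qed.

Ltac solve_continuity :=
  apply (@ex_derive_continuous R_AbsRing R_NormedModule); auto_derive;
  repeat split; try (apply ex_derive_Rpower; lra); try nra.

Lemma ex_RInt_halfline (f : R -> R) (lo a b : R) : lo < a -> lo < b ->
  (forall t, lo < t -> continuous f t) -> ex_RInt f a b.
Proof.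
  intros Ha Hb Hf. apply (@ex_RInt_continuous R_CompleteNormedModule).
  intros t Ht. apply Hf. pose proof (Rmin_glb_lt a b lo Ha Hb). lra.
Qed.

Lemma RInt_halfline_primitive (F f : R -> R) (lo a b : R) : lo < a -> lo < b ->
  (forall t, lo < t -> is_derive F t (f t)) ->
  (forall t, lo < t -> continuous f t) ->
  @eq R (RInt f a b) (F b - F a).
Proof.
  intros Ha Hb HF Hf. apply is_RInt_unique.
  pose proof (Rmin_glb_lt a b lo Ha Hb).
  apply (@is_RInt_derive R_CompleteNormedModule F f); intros t Ht; [apply HF | apply Hf]; lra.
Qed.

Lemma RInt_le_inv_sq (f : R -> R) (K a b : R) : 0 <= a <= b -> 0 <= K -> ex_RInt f a b ->
  (forall t, a <= t <= b -> (1 + t) ^ 2 * f t <= K) -> RInt f a b <= K / (1 + a).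
Proof.
  intros Hab HK Hf Hbound.
  assert (Hint : @eq R (RInt (fun t => K / (1 + t) ^ 2) a b) (K / (1 + a) - K / (1 + b))).
  { rewrite (RInt_halfline_primitive (fun t => - K / (1 + t)) _ (-1)).
    - field; split; lra.
    - lra.
    - lra.
    - intros t Ht. auto_derive; [lra | field; lra].
    - intros t Ht. solve_continuity. }
  apply Rle_trans with (RInt (fun t => K / (1 + t) ^ 2) a b).
  - apply RInt_le; [lra | exact Hf | |].
    + apply (ex_RInt_halfline _ (-1)); try lra. intros t Ht. solve_continuity.
    + intros t Ht. apply Rle_div_r; [nra |]. rewrite Rmult_comm. apply Hbound; lra.
  - rewrite Hint. assert (0 <= K / (1 + b)) by (apply Rdiv_le_0_compat; lra). lra.
Qed.

(* The truncated Euler integrand t^{y-1} (1 - t/c)^n and its explicit primitive,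
   obtained by repeated integration by parts. *)

Definition euler_integrand (y t : R) : R := Rpower t (y - 1) * exp (- t).

Definition trunc_integrand (c : R) (n : nat) (y t : R) : R := Rpower t (y - 1) * (1 - t / c) ^ n.

Fixpoint trunc_primitive (c : R) (m : nat) (y t : R) : R :=
  match m with
  | O => Rpower t y / y
  | S m' => Rpower t y * (1 - t / c) ^ S m' / y
            + INR (S m') / (c * y) * trunc_primitive c m' (y + 1) t
  end.

Lemma continuous_euler_integrand (y t : R) : 0 < t -> continuous (euler_integrand y) t.
Proof. intros Ht; unfold euler_integrand; solve_continuity. Qed.

Lemma continuous_trunc_integrand (c : R) (n : nat) (y t : R) :
  0 < t -> continuous (trunc_integrand c n y) t.
Proof. intros Ht; unfold trunc_integrand; solve_continuity. Qed.

Lemma is_derive_Rpower_div (y t : R) : 0 < y -> 0 < t ->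
  is_derive (fun u => Rpower u y / y) t (Rpower t (y - 1)).
Proof.
  intros Hy Ht. apply (is_derive_ext (fun u => / y * Rpower u y)); [intros u; apply Rmult_comm |].
  replace (Rpower t (y - 1)) with (/ y * (y * Rpower t (y - 1))) by (field; lra).
  apply (is_derive_scal (fun u => Rpower u y)), is_derive_Rpower; exact Ht.
Qed.

Lemma trunc_primitive_derive (m : nat) : forall c y t, 0 < c -> 0 < y -> 0 < t ->
  is_derive (trunc_primitive c m y) t (trunc_integrand c m y t).
Proof.
  unfold trunc_integrand.
  induction m as [| m IH]; intros c y t Hc Hy Ht; cbn [trunc_primitive].
  - rewrite Rmult_1_r. apply is_derive_Rpower_div; assumption.
  - rewrite S_INR. auto_derive.
    { repeat split; [apply ex_derive_Rpower; exact Ht | eexists; apply IH; lra]. }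
    rewrite Derive_Rpower by exact Ht.
    replace (Derive (fun u => trunc_primitive c m (y + 1) u) t)
      with (Rpower t (y + 1 - 1) * (1 - t / c) ^ m)
      by (symmetry; apply is_derive_unique, IH; lra).
    replace (match m with 0%nat => 1 | S _ => INR m + 1 end) with (INR m + 1)
      by (destruct m; simpl; ring).
    replace (y + 1 - 1) with y by ring.
    replace (Rpower t y) with (Rpower t (y - 1) * t)
      by (rewrite <- (Rpower_1 t Ht) at 2; rewrite <- Rpower_plus; f_equal; ring).
    simpl pow. replace (1 + - (t * / c)) with (1 - t / c) by reflexivity.
    (* naming 1 - t/c lets field treat its powers as a single atom *)
    set (u := 1 - t / c). field. lra.
Qed.

Lemma RInt_trunc_integrand (c : R) (n : nat) (y a b : R) : 0 < c -> 0 < y -> 0 < a -> 0 < b ->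
  @eq R (RInt (trunc_integrand c n y) a b)
    (trunc_primitive c n y b - trunc_primitive c n y a).
Proof.
  intros Hc Hy Ha Hb. apply (RInt_halfline_primitive _ _ 0); [exact Ha | exact Hb | |].
  - intros t Ht; apply trunc_primitive_derive; assumption.
  - apply continuous_trunc_integrand.
Qed.

Lemma poch_pos (y : R) (k : nat) : 0 < y -> 0 < poch y k.
Proof.
  intros Hy; induction k as [| k IH]; simpl; [lra |].
  apply Rmult_lt_0_compat; [exact IH | pose proof (pos_INR k); lra].
Qed.

Lemma poch_shift (y : R) (k : nat) : poch y (S k) = y * poch (y + 1) k.
Proof.
  induction k as [| k IH]; [simpl; ring |].
  change (poch y (S (S k)) = y * (poch (y + 1) k * (y + 1 + INR k))).
  cbn [poch] in IH |- *. rewrite IH, S_INR. ring.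
Qed.

Lemma trunc_primitive_at_c (m : nat) : forall c y, 0 < c -> 0 < y ->
  trunc_primitive c m y c = INR (fact m) * Rpower c y / poch y (S m).
Proof.
  induction m as [| m IH]; intros c y Hc Hy; cbn [trunc_primitive].
  - simpl. field. lra.
  - rewrite IH by lra.
    replace (1 - c / c) with 0 by (field; lra). rewrite pow_i by lia.
    rewrite (poch_shift y (S m)), Rpower_plus, Rpower_1, fact_simpl, mult_INR by exact Hc.
    pose proof (poch_pos (y + 1) (S m) ltac:(lra)). field. lra.
Qed.

Lemma trunc_primitive_small (m : nat) : forall c y, 0 < c -> 0 < y -> exists K, 0 <= K /\
  forall t, 0 < t <= c -> 0 <= trunc_primitive c m y t <= K * Rpower t y.
Proof.
  induction m as [| m IH]; intros c y Hc Hy.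
  - exists (/ y). split; [left; apply Rinv_0_lt_compat; exact Hy |].
    intros t Ht. simpl. pose proof (Rpower_pos t y).
    split; [apply Rdiv_le_0_compat; lra | unfold Rdiv; lra].
  - destruct (IH c (y + 1) Hc ltac:(lra)) as [K [HK HKb]].
    assert (Hiy : 0 < / y) by (apply Rinv_0_lt_compat; exact Hy).
    assert (Hm : 0 <= INR (S m)) by apply pos_INR.
    exists (/ y + INR (S m) * K / y). split.
    { assert (0 <= INR (S m) * K / y) by (apply Rdiv_le_0_compat; nra). lra. }
    intros t Ht. cbn [trunc_primitive]. destruct (HKb t Ht) as [G0 GK].
    assert (Hqm : 0 <= (1 - t / c) ^ S m <= 1)
      by (apply pow_unit_interval, one_minus_ratio; lra).
    assert (Hty : 0 < Rpower t y) by apply Rpower_pos.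
    assert (Hty1 : Rpower t (y + 1) <= c * Rpower t y).
    { rewrite Rpower_plus, Rpower_1 by lra. nra. }
    assert (Hcoef : 0 <= INR (S m) / (c * y)) by (apply Rdiv_le_0_compat; nra).
    assert (Hsecond : INR (S m) / (c * y) * trunc_primitive c m (y + 1) t
                      <= INR (S m) * K / y * Rpower t y).
    { apply Rle_trans with (INR (S m) / (c * y) * (K * (c * Rpower t y))).
      - apply Rmult_le_compat_l; [exact Hcoef | nra].
      - right. field. lra. }
    assert (Hfirst : 0 <= Rpower t y * (1 - t / c) ^ S m / y <= / y * Rpower t y).
    { split; [apply Rdiv_le_0_compat; nra |].
      unfold Rdiv. rewrite (Rmult_comm (/ y)). apply Rmult_le_compat_r; [lra |].
      rewrite <- (Rmult_1_r (Rpower t y)) at 2. apply Rmult_le_compat_l; lra. }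
    split; [nra | lra].
Qed.

Lemma trunc_primitive_le (n : nat) (c y a : R) : 0 < y -> 0 < a <= c ->
  0 <= trunc_primitive c n y a <= Rpower a y / y.
Proof.
  intros Hy Ha.
  destruct (trunc_primitive_small n c y ltac:(lra) Hy) as [K [HK HKb]].
  split; [apply HKb; exact Ha |].
  apply Rle_plus_epsilon. intros eps Heps.
  destruct (small_Rpower y (eps / (K + 1)) Hy ltac:(apply Rdiv_lt_0_compat; lra))
    as [d [Hd Hsmall]].
  set (a' := Rmin a d).
  assert (Ha' : 0 < a' <= a /\ a' <= d)
    by (unfold a'; repeat split; [apply Rmin_glb_lt | apply Rmin_l | apply Rmin_r]; lra).
  assert (Hsplit : trunc_primitive c n y a
                   = trunc_primitive c n y a' + RInt (trunc_integrand c n y) a' a)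
    by (rewrite RInt_trunc_integrand; lra).
  assert (Hcmp : RInt (trunc_integrand c n y) a' a
                 <= RInt (fun t => Rpower t (y - 1)) a' a).
  { apply RInt_le; [lra | apply (ex_RInt_halfline _ 0); try lra; apply continuous_trunc_integrand
                   | apply (ex_RInt_halfline _ 0); try lra; intros t Ht; solve_continuity |].
    intros t Ht. unfold trunc_integrand. pose proof (Rpower_pos t (y - 1)).
    assert (0 <= (1 - t / c) ^ n <= 1) by (apply pow_unit_interval, one_minus_ratio; lra).
    nra. }
  rewrite (RInt_halfline_primitive (fun t => Rpower t y / y) (fun t => Rpower t (y - 1)) 0)
    in Hcmp; try lra.
  2: { intros t Ht. apply is_derive_Rpower_div; assumption. }
  2: { intros t Ht. solve_continuity. }
  destruct (HKb a' ltac:(lra)) as [_ Hnear].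
  assert (Hsm : Rpower a' y < eps / (K + 1)) by (apply Hsmall; lra).
  assert (K * Rpower a' y <= eps).
  { apply Rle_trans with (K * (eps / (K + 1))); [apply Rmult_le_compat_l; lra |].
    replace (K * (eps / (K + 1))) with (eps * (K / (K + 1))) by (field; lra).
    assert (K / (K + 1) <= 1) by (apply Rle_div_l; lra). nra. }
  assert (0 < Rpower a' y / y) by (apply Rdiv_lt_0_compat; [apply Rpower_pos | exact Hy]).
  unfold Rdiv in *. lra.
Qed.

Definition gauss_seq (y : R) (n : nat) : R := INR (fact n) * Rpower (INR n) y / poch y (S n).

Lemma euler_integrand_pos (y t : R) : 0 < euler_integrand y t.
Proof. apply Rmult_lt_0_compat; [apply Rpower_pos | apply exp_pos]. Qed.

Lemma lim_div_INR (D : R) : is_lim_seq (fun n => D / INR n) 0.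
Proof.
  replace (Finite 0) with (Finite (D * 0)) by (f_equal; ring).
  apply is_lim_seq_mult'; [apply is_lim_seq_const |].
  replace (Finite 0) with (Rbar_inv p_infty) by reflexivity.
  apply is_lim_seq_inv; [apply is_lim_seq_INR | discriminate].
Qed.

Lemma eventually_small (D eps r : R) : 0 <= D -> 0 < eps ->
  exists N : nat, (1 <= N)%nat /\ r <= INR N /\ forall x, INR N <= x -> D / x < eps.
Proof.
  intros HD He. assert (Hq : 0 <= D / eps) by (apply Rdiv_le_0_compat; lra).
  destruct (INR_archimed 1 (Rmax r 0 + D / eps + 1)) as [N HN]; [lra |].
  rewrite Rmult_1_r in HN. pose proof (Rmax_l r 0). pose proof (Rmax_r r 0).
  exists N. repeat split; [apply INR_le; simpl; lra | lra |].
  intros x Hx. apply Rlt_div_l; [lra |].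
  replace D with (eps * (D / eps)) by (field; lra). apply Rmult_lt_compat_l; lra.
Qed.

Lemma Rpower_exp_bounded (s : R) : 0 <= s ->
  exists D, 0 < D /\ forall t, 0 < t -> Rpower t s * exp (- t) <= D.
Proof.
  intros Hs. destruct (INR_archimed 1 (s + 1)) as [m Hm]; [lra |]. rewrite Rmult_1_r in Hm.
  assert (Hm0 : (0 < m)%nat) by (destruct m; [simpl in Hm; lra | lia]).
  assert (Hmm : 0 < INR m ^ m) by (apply pow_lt, lt_0_INR; exact Hm0).
  exists (1 + INR m ^ m). split; [lra |].
  intros t Ht. pose proof (exp_pos (- t)). pose proof (Rpower_pos t s).
  destruct (Rle_dec t 1) as [Ht1 | Ht1].
  - assert (Rpower t s <= 1) by (apply Rpower_le_1; lra).
    assert (exp (- t) <= 1) by (left; rewrite <- exp_0; apply exp_increasing; lra).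
    nra.
  - assert (Hpow : Rpower t s <= t ^ m)
      by (rewrite <- Rpower_pow by lra; apply Rle_Rpower; lra).
    assert (Hexp : t ^ m * exp (- t) <= INR m ^ m).
    { pose proof (pow_le_exp t m ltac:(lra) Hm0) as Hle.
      assert (Hee : exp t * exp (- t) = 1) by (rewrite <- exp_plus, Rplus_opp_r; apply exp_0).
      apply Rmult_le_compat_r with (r := exp (- t)) in Hle; [| lra].
      rewrite Rmult_assoc, Hee, Rmult_1_r in Hle. exact Hle. }
    apply Rmult_le_compat_r with (r := exp (- t)) in Hpow; lra.
Qed.

Lemma euler_decay (y : R) : 0 < y ->
  exists D, 0 < D /\ forall t, 0 < t -> (1 + t) ^ 2 * (Rpower t (y + 1) * exp (- t)) <= D.
Proof.
  intros Hy.
  destruct (Rpower_exp_bounded (y + 1) ltac:(lra)) as [D1 [HD1 Hb1]].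
  destruct (Rpower_exp_bounded (y + 3) ltac:(lra)) as [D3 [HD3 Hb3]].
  exists (2 * D1 + 2 * D3). split; [lra |].
  intros t Ht. specialize (Hb1 t Ht). specialize (Hb3 t Ht).
  replace (y + 3) with (y + 1 + 2) in Hb3 by ring. rewrite Rpower_plus_2 in Hb3 by exact Ht.
  set (X := Rpower t (y + 1) * exp (- t)) in *.
  assert (HX : 0 < X) by (apply Rmult_lt_0_compat; [apply Rpower_pos | apply exp_pos]).
  assert (HX3 : t ^ 2 * X <= D3)
    by (replace (t ^ 2 * X) with (Rpower t (y + 1) * t ^ 2 * exp (- t)) by (unfold X; ring);
        exact Hb3).
  assert ((1 + t) ^ 2 <= 2 + 2 * t ^ 2) by (pose proof (pow2_ge_0 (1 - t)); simpl in *; nra).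
  apply Rle_trans with ((2 + 2 * t ^ 2) * X); [apply Rmult_le_compat_r; lra | lra].
Qed.

Section GaussProduct.

Variables y D : R.
Hypothesis Hy : 0 < y.
Hypothesis HD : 0 < D.
Hypothesis Hdecay : forall t, 0 < t -> (1 + t) ^ 2 * (Rpower t (y + 1) * exp (- t)) <= D.

Lemma trunc_tail_bound (n : nat) (b : R) : 1 <= b <= INR n ->
  0 <= RInt (trunc_integrand (INR n) n y) b (INR n) <= D / (1 + b).
Proof.
  intros Hb. assert (Hn : (1 <= n)%nat) by (apply INR_le; simpl; lra).
  assert (Hex : ex_RInt (trunc_integrand (INR n) n y) b (INR n))
    by (apply (ex_RInt_halfline _ 0); try lra; apply continuous_trunc_integrand).
  assert (Hpt : forall t, b <= t <= INR n ->
            0 <= trunc_integrand (INR n) n y t <= Rpower t (y + 1) * exp (- t)).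
  { intros t Ht. unfold trunc_integrand.
    pose proof (one_minus_pow_bounds n t Hn ltac:(lra)). pose proof (Rpower_pos t (y - 1)).
    replace (y + 1) with (y - 1 + 2) by ring. rewrite Rpower_plus_2 by lra.
    pose proof (exp_pos (- t)).
    split; [apply Rmult_le_pos; lra |]. rewrite (Rmult_assoc _ (t ^ 2)).
    apply Rmult_le_compat_l; [lra |].
    assert (1 <= t ^ 2) by (simpl; nra). nra. }
  split.
  - apply RInt_ge_0; [lra | exact Hex |]. intros t Ht; apply Hpt; lra.
  - apply RInt_le_inv_sq; [lra | lra | exact Hex |].
    intros t Ht. apply Rle_trans with ((1 + t) ^ 2 * (Rpower t (y + 1) * exp (- t))).
    + apply Rmult_le_compat_l; [nra | apply Hpt; lra].
    + apply Hdecay; lra.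
Qed.

Lemma trunc_gap_bound (n : nat) (a b : R) : (1 <= n)%nat -> 0 < a <= b -> b <= INR n ->
  0 <= RInt (fun t => euler_integrand y t - trunc_integrand (INR n) n y t) a b <= D / INR n.
Proof.
  intros Hn Hab Hbn. assert (Hc : 0 < INR n) by (apply lt_0_INR; lia).
  assert (Hex : ex_RInt (fun t => euler_integrand y t - trunc_integrand (INR n) n y t) a b).
  { apply (ex_RInt_halfline _ 0); try lra.
    intros t Ht; unfold euler_integrand, trunc_integrand; solve_continuity. }
  assert (Hpt : forall t, a <= t <= b ->
            0 <= euler_integrand y t - trunc_integrand (INR n) n y t
              <= Rpower t (y + 1) * exp (- t) / INR n).
  { intros t Ht. unfold euler_integrand, trunc_integrand.
    pose proof (one_minus_pow_bounds n t Hn ltac:(lra)).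
    pose proof (exp_minus_one_minus_pow n t Hn ltac:(lra)).
    pose proof (Rpower_pos t (y - 1)).
    replace (y + 1) with (y - 1 + 2) by ring. rewrite Rpower_plus_2 by lra.
    unfold Rdiv in *. split; nra. }
  split.
  - apply RInt_ge_0; [lra | exact Hex |]. intros t Ht; apply Hpt; lra.
  - apply Rle_trans with ((D / INR n) / (1 + a)).
    + apply RInt_le_inv_sq; [lra | apply Rdiv_le_0_compat; lra | exact Hex |].
      intros t Ht. apply Rle_trans with ((1 + t) ^ 2 * (Rpower t (y + 1) * exp (- t)) / INR n).
      * unfold Rdiv. rewrite Rmult_assoc. apply Rmult_le_compat_l; [nra | apply Hpt; lra].
      * unfold Rdiv. apply Rmult_le_compat_r; [left; apply Rinv_0_lt_compat; lra |].
        apply Hdecay; lra.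
    + apply Rle_div_l; [lra |]. assert (0 < D / INR n) by (apply Rdiv_lt_0_compat; lra). nra.
Qed.

(* The n-th Gauss quotient is the integral of the truncated integrand over (0, n];
   comparing it with the Euler integral over [a, b] gives three error terms. *)
Lemma gauss_seq_approx (n : nat) (a b : R) : (1 <= n)%nat -> 0 < a <= 1 -> 1 <= b <= INR n ->
  Rabs (RInt (euler_integrand y) a b - gauss_seq y n)
  <= Rpower a y / y + D / (1 + b) + D / INR n.
Proof.
  intros Hn Ha Hb. assert (Hc : 0 < INR n) by (apply lt_0_INR; lia).
  assert (HP : gauss_seq y n = trunc_primitive (INR n) n y (INR n))
    by (unfold gauss_seq; rewrite trunc_primitive_at_c; auto).
  assert (Hab : RInt (trunc_integrand (INR n) n y) a b
                = trunc_primitive (INR n) n y b - trunc_primitive (INR n) n y a)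
    by (apply RInt_trunc_integrand; lra).
  assert (Hbc : RInt (trunc_integrand (INR n) n y) b (INR n)
                = trunc_primitive (INR n) n y (INR n) - trunc_primitive (INR n) n y b)
    by (apply RInt_trunc_integrand; lra).
  pose proof (trunc_primitive_le n (INR n) y a Hy ltac:(lra)) as Ga.
  pose proof (trunc_tail_bound n b Hb) as Htail.
  pose proof (trunc_gap_bound n a b Hn ltac:(lra) ltac:(lra)) as Hgap.
  rewrite (RInt_minus (V := R_CompleteNormedModule)) in Hgap
    by (apply (ex_RInt_halfline _ 0); try lra;
        first [apply continuous_euler_integrand | apply continuous_trunc_integrand]).
  unfold minus, plus, opp in Hgap; simpl in Hgap.
  rewrite HP. apply Rabs_le_between. split; lra.
Qed.

(* Two Gauss quotients far out are close: choose a, then b = n_0, in gauss_seq_approx. *)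
Lemma gauss_seq_cauchy : ex_lim_seq_cauchy (gauss_seq y).
Proof.
  intros eps. pose proof (cond_pos eps) as He.
  destruct (small_Rpower y (eps * y / 6) Hy ltac:(apply Rdiv_lt_0_compat; nra))
    as [a [Ha Hsmall]].
  assert (Haeps : Rpower a y / y < eps / 6).
  { apply Rlt_div_l; [exact Hy |]. specialize (Hsmall a ltac:(lra)). lra. }
  destruct (eventually_small D (eps / 6) 1 ltac:(lra) ltac:(lra)) as [N [HN1 [_ HNx]]].
  assert (Hb : D / (1 + INR N) < eps / 6) by (apply HNx; lra).
  exists N. intros n m Hn Hm.
  assert (HnR : INR N <= INR n) by (apply le_INR; exact Hn).
  assert (HmR : INR N <= INR m) by (apply le_INR; exact Hm).
  pose proof (gauss_seq_approx n a (INR N) ltac:(lia) ltac:(lra)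
                ltac:(split; [apply (le_INR 1); exact HN1 | exact HnR])) as En.
  pose proof (gauss_seq_approx m a (INR N) ltac:(lia) ltac:(lra)
                ltac:(split; [apply (le_INR 1); exact HN1 | exact HmR])) as Em.
  pose proof (HNx (INR n) HnR). pose proof (HNx (INR m) HmR).
  apply Rabs_le_between in En. apply Rabs_le_between in Em.
  apply Rabs_def1; lra.
Qed.

(* Letting n -> oo in gauss_seq_approx: the limit l is the Euler integral up to
   errors vanishing at both ends. *)
Lemma euler_window_bound (l : R) : is_lim_seq (gauss_seq y) l ->
  forall a b, 0 < a <= 1 -> 1 <= b ->
  Rabs (RInt (euler_integrand y) a b - l) <= Rpower a y / y + D / (1 + b).
Proof.
  intros Hl a b Ha Hb.
  set (I := RInt (euler_integrand y) a b). set (A := Rpower a y / y + D / (1 + b)).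
  destruct (eventually_small 0 1 b ltac:(lra) ltac:(lra)) as [N [HN1 [HNb _]]].
  assert (Hev : eventually (fun n => Rabs (I - gauss_seq y n) <= A + D / INR n)).
  { exists N. intros n Hn. apply gauss_seq_approx; [lia | exact Ha |].
    split; [exact Hb |]. apply Rle_trans with (INR N); [exact HNb | apply le_INR; exact Hn]. }
  assert (Hleft : is_lim_seq (fun n => Rabs (I - gauss_seq y n)) (Rabs (I - l))).
  { apply (is_lim_seq_abs _ (Finite (I - l))).
    apply is_lim_seq_minus'; [apply is_lim_seq_const | exact Hl]. }
  assert (Hright : is_lim_seq (fun n => A + D / INR n) (A + 0)).
  { apply is_lim_seq_plus'; [apply is_lim_seq_const | apply lim_div_INR]. }
  pose proof (is_lim_seq_le_loc _ _ _ _ Hev Hleft Hright) as Hle.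
  simpl in Hle. rewrite Rplus_0_r in Hle. exact Hle.
Qed.

Lemma euler_is_RInt_gen (l : R) : is_lim_seq (gauss_seq y) l ->
  is_RInt_gen (euler_integrand y) (at_right 0) (Rbar_locally p_infty) l.
Proof.
  intros Hl Q [eps HQ]. pose proof (cond_pos eps) as He.
  destruct (small_Rpower y (eps * y / 2) Hy ltac:(apply Rdiv_lt_0_compat; nra))
    as [a0 [Ha0 Hsmall]].
  destruct (eventually_small D (eps / 2) 1 ltac:(lra) ltac:(lra)) as [N [_ [HN1 HNx]]].
  apply (Filter_prod _ _ _ (fun a => 0 < a < a0) (fun b => INR N < b)).
  - exists (mkposreal a0 (proj1 Ha0)). intros x Hx Hx0. simpl in Hx.
    unfold ball in Hx; simpl in Hx; unfold AbsRing_ball, abs, minus, plus, opp in Hx; simpl in Hx.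
    rewrite Ropp_0, Rplus_0_r in Hx. apply Rabs_def2 in Hx. lra.
  - exists (INR N). auto.
  - intros a b Ha Hb. simpl. exists (RInt (euler_integrand y) a b). split.
    + apply (RInt_correct (V := R_CompleteNormedModule)).
      apply (ex_RInt_halfline _ 0); try lra. apply continuous_euler_integrand.
    + apply HQ. change (Rabs (RInt (euler_integrand y) a b - l) < eps).
      pose proof (euler_window_bound l Hl a b ltac:(lra) ltac:(lra)) as Hw.
      assert (Rpower a y / y < eps / 2).
      { apply Rlt_div_l; [exact Hy |]. specialize (Hsmall a ltac:(lra)). lra. }
      pose proof (HNx (1 + b) ltac:(lra)). lra.
Qed.

(* l is at least the integral over [1, 2] up to small errors, hence positive. *)
Lemma gauss_limit_pos (l : R) : is_lim_seq (gauss_seq y) l -> 0 < l.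
Proof.
  intros Hl. set (I := RInt (euler_integrand y) 1 2).
  assert (HI : 0 < I).
  { apply RInt_gt_0; [lra | intros; apply euler_integrand_pos |].
    intros t Ht; apply continuous_euler_integrand; lra. }
  destruct (small_Rpower y (I * y / 4) Hy ltac:(apply Rdiv_lt_0_compat; nra))
    as [a [Ha Hsmall]].
  assert (Rpower a y / y < I / 4).
  { apply Rlt_div_l; [exact Hy |]. specialize (Hsmall a ltac:(lra)). lra. }
  destruct (eventually_small D (I / 4) 2 ltac:(lra) ltac:(lra)) as [N [_ [HN2 HNx]]].
  set (b := INR N) in *. pose proof (HNx (1 + b) ltac:(lra)).
  pose proof (euler_window_bound l Hl a b ltac:(lra) ltac:(lra)) as Hw.
  apply Rabs_le_between in Hw.
  assert (Hex : forall u v, 0 < u -> 0 < v -> ex_RInt (euler_integrand y) u v)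
    by (intros u v Hu Hv; apply (ex_RInt_halfline _ 0); try lra; apply continuous_euler_integrand).
  assert (Hnonneg : forall u v, 0 < u <= v -> 0 <= RInt (euler_integrand y) u v)
    by (intros u v Huv; apply RInt_ge_0; [lra | apply Hex; lra | intros; left; apply euler_integrand_pos]).
  assert (Hsplit : RInt (euler_integrand y) a b
                   = RInt (euler_integrand y) a 1 + (I + RInt (euler_integrand y) 2 b)).
  { unfold I. rewrite <- (RInt_Chasles (V := R_CompleteNormedModule) _ a 1 b), 
      <- (RInt_Chasles (V := R_CompleteNormedModule) _ 1 2 b); try (apply Hex; lra).
    reflexivity. }
  pose proof (Hnonneg a 1 ltac:(lra)). pose proof (Hnonneg 2 b ltac:(lra)). lra.
Qed.

Lemma gauss_product_with_decay : is_lim_seq (gauss_seq y) (Gamma y) /\ 0 < Gamma y.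
Proof.
  destruct (proj2 (ex_lim_seq_cauchy_corr (gauss_seq y)) gauss_seq_cauchy) as [l Hl].
  pose proof (euler_is_RInt_gen l Hl) as Hint.
  assert (HG : Gamma y = l)
    by (unfold Gamma; apply (is_RInt_gen_unique (V := R_CompleteNormedModule)); exact Hint).
  rewrite HG. split; [exact Hl | apply gauss_limit_pos; exact Hl].
Qed.

End GaussProduct.

Lemma gauss_product (y : R) : 0 < y -> is_lim_seq (gauss_seq y) (Gamma y) /\ 0 < Gamma y.
Proof.
  intros Hy. destruct (euler_decay y Hy) as [D [HD Hdecay]].
  eapply gauss_product_with_decay; eassumption.
Qed.

(* The ratio poch_ratio z n k = prod_{j<k} (n - j) / (z + n + j + 1) converts the k-th
   summand into the 0-th one: (n-k)! (z)_{n+k+1} poch_ratio z n k = n! (z)_{n+1}. *)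

Fixpoint poch_ratio (z : R) (n k : nat) : R :=
  match k with
  | O => 1
  | S k' => poch_ratio z n k' * ((INR n - INR k') / (z + INR n + INR k' + 1))
  end.

Lemma poch_ratio_bounds (z : R) (n k : nat) : 0 < z -> (k <= n)%nat -> 0 < poch_ratio z n k <= 1.
Proof.
  intros Hz. induction k as [| k IH]; intros Hk; simpl; [lra |].
  destruct (IH ltac:(lia)) as [Hpos Hle].
  apply lt_INR in Hk. pose proof (pos_INR k).
  assert (Hfac : 0 < (INR n - INR k) / (z + INR n + INR k + 1) <= 1)
    by (split; [apply Rdiv_lt_0_compat | apply Rle_div_l]; lra).
  split; [apply Rmult_lt_0_compat; lra | nra].
Qed.

Lemma poch_ratio_identity (z : R) (n k : nat) : 0 < z -> (k <= n)%nat ->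
  INR (fact (n - k)) * poch z (n + k + 1) * poch_ratio z n k = INR (fact n) * poch z (S n).
Proof.
  intros Hz. induction k as [| k IH]; intros Hk.
  - cbn [poch_ratio]. rewrite Nat.sub_0_r, Nat.add_0_r, Nat.add_1_r. ring.
  - rewrite <- (IH ltac:(lia)).
    replace (n - k)%nat with (S (n - S k)) by lia.
    replace (n + S k + 1)%nat with (S (n + k + 1)) by lia.
    rewrite fact_simpl, mult_INR. cbn [poch poch_ratio].
    replace (S (n - S k)) with (n - k)%nat by lia.
    rewrite minus_INR, !plus_INR by lia. simpl (INR 1).
    pose proof (pos_INR n). pose proof (pos_INR k). field. lra.
Qed.

(* For fixed k the ratio tends to 1, each factor behaving like (1 - k/n)/(1 + (z+k+1)/n). *)
Lemma poch_ratio_lim (z : R) (k : nat) : 0 < z -> is_lim_seq (fun n => poch_ratio z n k) 1.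
Proof.
  intros Hz. induction k as [| k IH]; simpl; [apply is_lim_seq_const |].
  replace (Finite 1) with (Finite (1 * ((1 - 0) / (1 + 0)))) by (f_equal; field).
  apply is_lim_seq_mult'; [exact IH |].
  apply is_lim_seq_ext_loc with (fun n => (1 - INR k / INR n) / (1 + (z + INR k + 1) / INR n)).
  - exists 1%nat. intros n Hn. apply le_INR in Hn. simpl in Hn.
    pose proof (pos_INR k). field. lra.
  - apply is_lim_seq_div'; [| | lra].
    + apply is_lim_seq_minus'; [apply is_lim_seq_const | apply lim_div_INR].
    + apply is_lim_seq_plus'; [apply is_lim_seq_const | apply lim_div_INR].
Qed.

Lemma sum_n_le_on (u v : nat -> R) (n : nat) :
  (forall k, (k <= n)%nat -> u k <= v k) -> sum_n u n <= sum_n v n.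
Proof.
  induction n as [| n IH]; intros Huv; [rewrite !sum_O; apply Huv; lia |].
  rewrite !sum_Sn. apply Rplus_le_compat; [apply IH; intros; apply Huv; lia | apply Huv; lia].
Qed.

Lemma sum_n_mono_on (u : nat -> R) (K n : nat) : (K <= n)%nat ->
  (forall k, (K < k <= n)%nat -> 0 <= u k) -> sum_n u K <= sum_n u n.
Proof.
  induction n as [| n IH]; intros HKn Hu.
  - replace K with 0%nat by lia. lra.
  - destruct (Nat.eq_dec K (S n)) as [-> | HK]; [lra |].
    rewrite sum_Sn. pose proof (Hu (S n) ltac:(lia)).
    pose proof (IH ltac:(lia) ltac:(intros k Hk; apply Hu; lia)).
    unfold plus; simpl. lra.
Qed.

Lemma is_lim_seq_sum_n_fixed (u : nat -> nat -> R) (l : nat -> R) (K : nat) :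
  (forall k, is_lim_seq (fun n => u n k) (l k)) ->
  is_lim_seq (fun n => sum_n (u n) K) (sum_n l K).
Proof.
  intros Hu. induction K as [| K IH].
  - rewrite sum_O. apply (is_lim_seq_ext (fun n => u n 0%nat)); [intros; rewrite sum_O |]; auto.
  - rewrite sum_Sn. apply (is_lim_seq_ext (fun n => sum_n (u n) K + u n (S K))).
    + intros n; rewrite sum_Sn; reflexivity.
    + apply is_lim_seq_plus'; [exact IH | apply Hu].
Qed.

Lemma partial_sum_le_series (m : nat -> R) (S : R) (n : nat) :
  (forall k, 0 <= m k) -> is_series m S -> sum_n m n <= S.
Proof.
  intros Hm Hs.
  assert (Hle := is_lim_seq_le_loc (fun _ => sum_n m n) (sum_n m) (sum_n m n) S).
  simpl in Hle. apply Hle; [| apply is_lim_seq_const | exact Hs].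
  exists n. intros k Hk. apply sum_n_mono_on; [exact Hk | intros; apply Hm].
Qed.

Lemma tannery_nonneg (m : nat -> R) (r : nat -> nat -> R) (S : R) :
  (forall k, 0 <= m k) -> is_series m S ->
  (forall n k, (k <= n)%nat -> 0 <= r n k <= 1) ->
  (forall k, is_lim_seq (fun n => r n k) 1) ->
  is_lim_seq (fun n => sum_n (fun k => m k * r n k) n) S.
Proof.
  intros Hm Hs Hr Hrlim. apply is_lim_seq_Reals. intros eps He.
  (* restate convergence with the partial sums of R itself, for linear arithmetic *)
  assert (Hpartial : is_lim_seq (sum_n m) S) by exact Hs.
  destruct (proj1 (is_lim_seq_Reals _ _) Hpartial (eps / 2) ltac:(lra)) as [K HK].
  specialize (HK K (Nat.le_refl K)). unfold R_dist in HK. apply Rabs_def2 in HK as [HK1 HK2].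
  pose proof (partial_sum_le_series m S K Hm Hs) as HSK.
  assert (Hfin : is_lim_seq (fun n => sum_n (fun k => m k * r n k) K) (sum_n m K)).
  { rewrite <- (sum_n_ext (fun k => m k * 1)) by (intros; apply Rmult_1_r).
    apply (is_lim_seq_sum_n_fixed (fun n k => m k * r n k)). intros k.
    apply is_lim_seq_mult'; [apply is_lim_seq_const | apply Hrlim]. }
  destruct (proj1 (is_lim_seq_Reals _ _) Hfin (eps / 2) ltac:(lra)) as [N HN].
  exists (Nat.max N K). intros n Hn. specialize (HN n ltac:(lia)).
  unfold R_dist in HN. apply Rabs_def2 in HN as [HN1 HN2].
  assert (Hlow : sum_n (fun k => m k * r n k) K <= sum_n (fun k => m k * r n k) n).
  { apply sum_n_mono_on; [lia |]. intros k Hk.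
    apply Rmult_le_pos; [apply Hm | apply Hr; lia]. }
  assert (Hup : sum_n (fun k => m k * r n k) n <= sum_n m n).
  { apply sum_n_le_on. intros k Hk. destruct (Hr n k Hk). pose proof (Hm k).
    rewrite <- (Rmult_1_r (m k)) at 2. apply Rmult_le_compat_l; lra. }
  pose proof (partial_sum_le_series m S n Hm Hs).
  apply Rabs_def1; lra.
Qed.

Lemma ln_ge_one_minus_inv (z : R) : 0 < z -> 1 - / z <= ln z.
Proof.
  intros Hz. pose proof (exp_ineq1_le (ln (/ z))) as H.
  rewrite exp_ln, ln_Rinv in H by (try apply Rinv_0_lt_compat; exact Hz). lra.
Qed.

Lemma Rpower_telescope (r u : R) : 0 < r -> 1 <= u ->
  r * Rpower (u + 1) (- r - 1) <= Rpower u (- r) - Rpower (u + 1) (- r).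
Proof.
  intros Hr Hu.
  assert (Hsplit : Rpower u (- r) = Rpower (u + 1) (- r) * Rpower ((u + 1) / u) r).
  { unfold Rpower. rewrite <- exp_plus, ln_div by lra. f_equal. ring. }
  assert (Hshift : Rpower (u + 1) (- r - 1) = Rpower (u + 1) (- r) / (u + 1)).
  { replace (- r - 1) with (- r + - (1)) by ring.
    rewrite Rpower_plus, (Rpower_Ropp (u + 1) 1), Rpower_1 by lra. reflexivity. }
  assert (Hln : 1 / (u + 1) <= ln ((u + 1) / u)).
  { pose proof (ln_ge_one_minus_inv ((u + 1) / u) ltac:(apply Rdiv_lt_0_compat; lra)) as H.
    replace (1 - / ((u + 1) / u)) with (1 / (u + 1)) in H by (field; lra). exact H. }
  assert (Hexp : 1 + r / (u + 1) <= Rpower ((u + 1) / u) r).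
  { unfold Rpower. apply Rle_trans with (1 + r * ln ((u + 1) / u)); [| apply exp_ineq1_le].
    assert (r * (1 / (u + 1)) <= r * ln ((u + 1) / u)) by (apply Rmult_le_compat_l; lra).
    unfold Rdiv in *. lra. }
  rewrite Hsplit, Hshift. pose proof (Rpower_pos (u + 1) (- r)).
  apply Rmult_le_compat_l with (r := Rpower (u + 1) (- r)) in Hexp; [| lra].
  replace (r * (Rpower (u + 1) (- r) / (u + 1)))
    with (Rpower (u + 1) (- r) * (1 + r / (u + 1)) - Rpower (u + 1) (- r)) by (field; lra).
  lra.
Qed.

Definition pseries_term (s : R) (k : nat) : R := Rpower (INR k + 1) (- s).

Lemma pseries_partial_bound (s : R) (n : nat) : 1 < s ->
  sum_n (pseries_term s) n <= 1 + (1 - Rpower (INR n + 1) (1 - s)) / (s - 1).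
Proof.
  intros Hs. induction n as [| n IH].
  - rewrite sum_O. unfold pseries_term. simpl. rewrite Rplus_0_l, !Rpower_one_base. lra.
  - rewrite sum_Sn. unfold pseries_term at 2. rewrite !S_INR. unfold plus; simpl.
    pose proof (pos_INR n).
    pose proof (Rpower_telescope (s - 1) (INR n + 1) ltac:(lra) ltac:(lra)) as T.
    replace (- (s - 1) - 1) with (- s) in T by ring.
    replace (- (s - 1)) with (1 - s) in T by ring.
    assert (Hdiv : Rpower (INR n + 1 + 1) (- s)
                   <= (Rpower (INR n + 1) (1 - s) - Rpower (INR n + 1 + 1) (1 - s)) / (s - 1))
      by (apply Rle_div_r; lra).
    replace ((1 - Rpower (INR n + 1 + 1) (1 - s)) / (s - 1))
      with ((1 - Rpower (INR n + 1) (1 - s)) / (s - 1)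
            + (Rpower (INR n + 1) (1 - s) - Rpower (INR n + 1 + 1) (1 - s)) / (s - 1))
      by (field; lra).
    lra.
Qed.

Lemma ex_series_pseries (s : R) : 1 < s -> ex_series (pseries_term s).
Proof.
  intros Hs. destruct (ex_finite_lim_seq_incr (sum_n (pseries_term s)) (1 + 1 / (s - 1)))
    as [l Hl]; [| | exists l; exact Hl].
  - intros n. apply sum_n_mono_on; [lia |]. intros k _. left; apply Rpower_pos.
  - intros n. eapply Rle_trans; [apply pseries_partial_bound; exact Hs |].
    pose proof (Rpower_pos (INR n + 1) (1 - s)).
    assert (0 < / (s - 1)) by (apply Rinv_0_lt_compat; lra). unfold Rdiv. nra.
Qed.

(* ln z <= z^e / e, from 1 + ln w <= w applied to w = z^e. *)
Lemma ln_le_Rpower (e z : R) : 0 < e -> 0 < z -> ln z <= Rpower z e / e.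
Proof.
  intros He Hz. pose proof (exp_ineq1_le (ln (Rpower z e))) as H.
  rewrite exp_ln in H by apply Rpower_pos. rewrite ln_Rpower in H.
  apply Rle_div_r; [exact He |]. lra.
Qed.

Lemma ln_pow_le_Rpower (q d : R) : 0 < d ->
  exists A, 0 < A /\ forall z, 2 <= z -> Rpower (ln z) q <= A * Rpower z d.
Proof.
  intros Hd. assert (Hl2 : 0 < ln 2) by (rewrite <- ln_1; apply ln_increasing; lra).
  destruct (Rle_dec q 0) as [Hq | Hq].
  - exists (Rpower (ln 2) q). split; [apply Rpower_pos |]. intros z Hz.
    assert (Hlz : ln 2 <= ln z) by (apply ln_le; lra).
    assert (Hdec : Rpower (ln z) q <= Rpower (ln 2) q).
    { unfold Rpower. assert (ln (ln 2) <= ln (ln z)) by (apply ln_le; lra).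
      destruct (Req_dec (q * ln (ln z)) (q * ln (ln 2))) as [E | E]; [rewrite E; lra |].
      left; apply exp_increasing. nra. }
    assert (1 <= Rpower z d) by (rewrite <- (Rpower_O z) by lra; apply Rle_Rpower; lra).
    pose proof (Rpower_pos (ln 2) q). nra.
  - exists (Rpower (q / d) q). split; [apply Rpower_pos |]. intros z Hz.
    assert (Hlz : 0 < ln z) by (rewrite <- ln_1; apply ln_increasing; lra).
    assert (Hqd : 0 < d / q) by (apply Rdiv_lt_0_compat; lra).
    pose proof (ln_le_Rpower (d / q) z Hqd ltac:(lra)) as Hle.
    replace (Rpower z (d / q) / (d / q)) with (q / d * Rpower z (d / q)) in Hle by (field; lra).
    apply Rle_trans with (Rpower (q / d * Rpower z (d / q)) q); [apply Rle_Rpower_l; lra |].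
    rewrite <- Rpower_mult_distr by (try apply Rdiv_lt_0_compat; try apply Rpower_pos; lra).
    rewrite Rpower_mult. replace (d / q * q) with d by (field; lra). lra.
Qed.

Lemma natpow_lower (k : nat) (p eps : R) : 0 < eps -> 0 < p ->
  Rmin eps (Rpower 2 (- p)) * Rpower (INR k + 1) p <= natpow k p + eps.
Proof.
  intros He Hp. set (c0 := Rmin eps (Rpower 2 (- p))).
  assert (Hc0 : 0 < c0) by (apply Rmin_glb_lt; [lra | apply Rpower_pos]).
  destruct k as [| k].
  - simpl. rewrite Rplus_0_l, Rpower_one_base. pose proof (Rmin_l eps (Rpower 2 (- p))).
    unfold c0. lra.
  - unfold natpow. assert (Hk : 1 <= INR (S k)) by (rewrite S_INR; pose proof (pos_INR k); lra).
    assert (Hmono : Rpower (INR (S k) + 1) p <= Rpower (2 * INR (S k)) p)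
      by (apply Rle_Rpower_l; lra).
    assert (Hscale : Rpower 2 (- p) * Rpower (2 * INR (S k)) p = Rpower (INR (S k)) p).
    { rewrite <- Rpower_mult_distr by lra. rewrite <- Rmult_assoc, <- (Rpower_plus).
      replace (- p + p) with 0 by ring. rewrite Rpower_O, Rmult_1_l by lra. reflexivity. }
    assert (Hc2 : c0 <= Rpower 2 (- p)) by apply Rmin_r.
    pose proof (Rpower_pos (INR (S k) + 1) p).
    assert (c0 * Rpower (INR (S k) + 1) p <= Rpower 2 (- p) * Rpower (2 * INR (S k)) p).
    { apply Rmult_le_compat; try lra. }
    lra.
Qed.

Lemma log_weighted_summable (m z : nat -> R) (B eps p q C : R) :
  0 < eps -> 1 < p -> 0 < C -> 0 < B ->
  (forall k, 2 <= z k <= B * (INR k + 1)) ->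
  (forall k, Rabs (m k) <= C * Rpower (ln (z k)) q / (natpow k p + eps)) ->
  ex_series (fun k => Rabs (m k)).
Proof.
  intros He Hp HC HB Hz Hm.
  set (d := (p - 1) / 2). assert (Hd : 0 < d) by (unfold d; lra).
  destruct (ln_pow_le_Rpower q d Hd) as [A [HA HAb]].
  set (c0 := Rmin eps (Rpower 2 (- p))).
  assert (Hc0 : 0 < c0) by (apply Rmin_glb_lt; [lra | apply Rpower_pos]).
  set (Dc := C * A * Rpower B d / c0).
  apply (ex_series_le (fun k => Rabs (m k)) (fun k => Dc * pseries_term ((p + 1) / 2) k)).
  2: { apply (ex_series_ext (fun k => scal Dc (pseries_term ((p + 1) / 2) k))); [reflexivity |].
       apply (@ex_series_scal_l R_AbsRing R_CompleteNormedModule), ex_series_pseries. lra. }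
  intros k. change (Rabs (Rabs (m k)) <= Dc * pseries_term ((p + 1) / 2) k).
  rewrite Rabs_Rabsolu. eapply Rle_trans; [apply Hm |].
  pose proof (pos_INR k). specialize (Hz k).
  assert (Hlog : Rpower (ln (z k)) q <= A * (Rpower B d * Rpower (INR k + 1) d)).
  { eapply Rle_trans; [apply HAb; lra |]. apply Rmult_le_compat_l; [lra |].
    rewrite Rpower_mult_distr by lra. apply Rle_Rpower_l; lra. }
  pose proof (natpow_lower k p eps He ltac:(lra)) as Hden. fold c0 in Hden.
  unfold pseries_term. replace (- ((p + 1) / 2)) with (d + - p) by (unfold d; field).
  rewrite Rpower_plus, Rpower_Ropp.
  pose proof (Rpower_pos (INR k + 1) p). pose proof (Rpower_pos (INR k + 1) d).
  pose proof (Rpower_pos B d). pose proof (Rpower_pos (ln (z k)) q).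
  apply Rle_trans with (C * (A * (Rpower B d * Rpower (INR k + 1) d))
                        / (c0 * Rpower (INR k + 1) p)).
  - unfold Rdiv. apply Rmult_le_compat; [nra | left; apply Rinv_0_lt_compat; nra | |].
    + apply Rmult_le_compat_l; lra.
    + apply Rinv_le_contravar; nra.
  - right. unfold Dc. field. lra.
Qed.

(* N (x)_{n+1}^2 / (n! (2x)_{n+1}) is a quotient of Gauss sequences, hence tends to
   N Gamma(2x) / Gamma(x)^2 = N / B(x, x). *)
Lemma beta_prefactor_lim (c x : R) : 0 < x ->
  is_lim_seq (fun n => c * poch x (S n) ^ 2 / (INR (fact n) * poch (x + x) (S n)))
    (c / Beta x x).
Proof.
  intros Hx. assert (Hxx : 0 < x + x) by lra.
  destruct (gauss_product x Hx) as [Hlim1 Hpos1].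
  destruct (gauss_product (x + x) Hxx) as [Hlim2 Hpos2].
  apply is_lim_seq_ext_loc with (fun n => c * gauss_seq (x + x) n / (gauss_seq x n * gauss_seq x n)).
  - exists 1%nat. intros n Hn. unfold gauss_seq.
    assert (0 < INR n) by (apply lt_0_INR; lia). rewrite Rpower_plus.
    pose proof (poch_pos x (S n) Hx). pose proof (poch_pos (x + x) (S n) Hxx).
    pose proof (Rpower_pos (INR n) x). pose proof (INR_fact_lt_0 n).
    field. repeat split; lra.
  - replace (c / Beta x x) with (c * Gamma (x + x) / (Gamma x * Gamma x))
      by (unfold Beta; field; repeat split; lra).
    apply is_lim_seq_div'; [| | nra].
    + apply is_lim_seq_mult'; [apply is_lim_seq_const | exact Hlim2].
    + apply is_lim_seq_mult'; exact Hlim1.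
Qed.

Lemma summand_factor (m A z : R) (n k : nat) : 0 < z -> (k <= n)%nat ->
  m * A / (INR (fact (n - k)) * poch z (n + k + 1))
  = A / (INR (fact n) * poch z (S n)) * (m * poch_ratio z n k).
Proof.
  intros Hz Hk. rewrite <- (poch_ratio_identity z n k Hz Hk).
  pose proof (poch_ratio_bounds z n k Hz Hk). pose proof (poch_pos z (n + k + 1) Hz).
  pose proof (INR_fact_lt_0 (n - k)).
  field. repeat split; lra.
Qed.

Theorem mainTheorem6 (N a : nat) (eps p q C : R) (M : nat -> R)
  (Ha : (1 <= a <= N)%nat) (Heps : 0 < eps) (Hp : 1 < p) (HC : 0 < C)
  (HM : forall k : nat,
      Rabs (M k) <
        C * Rpower (ln (INR N * INR k + INR N + INR a)) q / (natpow k p + eps)) :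
  is_lim_seq
    (fun n : nat =>
       sum_n (fun k : nat =>
          Rabs (M k) * (INR N * (poch (INR a / INR N) (S n)) ^ 2)
          / (INR (Factorial.fact (n - k)) * poch (2 * INR a / INR N) (n + k + 1))) n)
    (INR N / Beta (INR a / INR N) (INR a / INR N) * Series (fun k => Rabs (M k))).
Proof.
  assert (HaR : 1 <= INR a) by (apply (le_INR 1); lia).
  assert (HNR : INR a <= INR N) by (apply le_INR; lia).
  assert (Hx : 0 < INR a / INR N) by (apply Rdiv_lt_0_compat; lra).
  replace (2 * INR a / INR N) with (INR a / INR N + INR a / INR N) by (field; lra).
  set (x := INR a / INR N) in *.
  assert (Hsum : is_series (fun k => Rabs (M k)) (Series (fun k => Rabs (M k)))).
  { apply Series_correct.
    apply (log_weighted_summable M (fun k => INR N * INR k + INR N + INR a) (2 * INR N) eps p q C);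
      try assumption; [lra | | intros k; left; apply HM].
    intros k. pose proof (pos_INR k). split; nra. }
  apply (is_lim_seq_ext
    (fun n => INR N * poch x (S n) ^ 2 / (INR (fact n) * poch (x + x) (S n))
              * sum_n (fun k => Rabs (M k) * poch_ratio (x + x) n k) n)).
  - intros n. rewrite <- (sum_n_mult_l (K := R_Ring)).
    apply sum_n_ext_loc. intros k Hk. symmetry. apply summand_factor; [lra | exact Hk].
  - apply is_lim_seq_mult'; [apply beta_prefactor_lim; exact Hx |].
    apply tannery_nonneg; [intros; apply Rabs_pos | exact Hsum | |].
    + intros n k Hk. pose proof (poch_ratio_bounds (x + x) n k ltac:(lra) Hk). lra.
    + intros k. apply poch_ratio_lim. lra.
Qed.
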